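(* Let $M$ be a globally hyperbolic developable conformally flat spacetime of dimension $n\ge3$ with developing map $D:M\to\widetilde{Ein}_{1,n-1}$. Then for every $p\in M$, $$I^-\big(D(I^-(p))\big)=I^-(D(p)),$$ where the left-hand side is the chronological past in $\widetilde{Ein}_{1,n-1}$ of the set $D(I^-(p))$.
   Context: $\widetilde{Ein}_{1,n-1}$ denotes the universal cover of the Einstein universe, conformally identified with $\mathbb{S}^{n-1}\times\mathbb{R}$ with the conformal class of $d\sigma^2-dt^2$, time-oriented by $\partial_t$. A conformally flat spacetime $M$ is developable if it admits a developing map: a conformal, time-orientation preserving local diffeomorphism $D:M\to\widetilde{Ein}_{1,n-1}$. *)

From HB Require Import structures.
From mathcomp Require Import all_boot all_order all_algebra.
From mathcomp Require Import all_classical all_reals all_analysis.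
Set Implicit Arguments. Unset Strict Implicit. Unset Printing Implicit Defensive.
Import Order.TTheory GRing.Theory Num.Theory.
Import numFieldNormedType.Exports.
Local Open Scope classical_set_scope.
Local Open Scope ring_scope.

(* Ambient space R^n x R containing the cylinder S^{n-1} x R = universal
   cover of the Einstein universe Ein_{1,n-1}. *)
Definition Pt (R : realType) (n : nat) := ('rV[R]_n * R)%type.

(* Euclidean squared norm on R^n (the round metric on S^{n-1} is the
   restriction of the Euclidean metric). *)
Definition sqn (R : realType) (n : nat) (v : 'rV[R]_n) : R :=
  \sum_(i < n) v ord0 i ^+ 2.

Definition cyl (R : realType) (n : nat) : set (Pt R n) :=
  [set z | sqn z.1 = 1].

(* tangent vector (v, tau) of Ein~ at a point, with metric dsigma^2 - dt^2,
   time-oriented by d/dt *)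
Definition fut_timelike (R : realType) (n : nat) (v : 'rV[R]_n) (tau : R) :=
  sqn v < tau ^+ 2 /\ 0 < tau.
Definition fut_causal (R : realType) (n : nat) (v : 'rV[R]_n) (tau : R) :=
  sqn v <= tau ^+ 2 /\ 0 < tau.

(* A curve c : [0,1] -> X (X a space mapped to Ein~ by D) whose image under D
   is piecewise C^1 with all (one-sided) velocities satisfying P.
   Each piece is the restriction to [a_i, a_(i+1)] of a C^1 map R -> R^n x R. *)
Definition pw_curve (R : realType) (n : nat) (X : topologicalType)
    (D : X -> Pt R n) (P : 'rV[R]_n -> R -> Prop) (c : R -> X) : Prop :=
  {within `[0, 1], continuous c} /\
  exists (k : nat) (a : nat -> R),
    [/\ a 0%N = 0, a k = 1,
        (forall i, (i < k)%N -> a i < a i.+1) &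
        forall i, (i < k)%N ->
          exists (g : R -> 'rV[R]_n) (h : R -> R),
            [/\ forall s, derivable g s 1,
                forall s, derivable h s 1,
                continuous (derive1 g),
                continuous (derive1 h) &
                forall s, a i <= s <= a i.+1 ->
                  D (c s) = (g s, h s) /\ P (derive1 g s) (derive1 h s)]].

Definition chron (R : realType) (n : nat) (X : topologicalType)
    (D : X -> Pt R n) (p q : X) : Prop :=
  exists c, pw_curve D (@fut_timelike R n) c /\ c 0 = p /\ c 1 = q.

Definition causal_rel (R : realType) (n : nat) (X : topologicalType)
    (D : X -> Pt R n) (p q : X) : Prop :=
  p = q \/ exists c, pw_curve D (@fut_causal R n) c /\ c 0 = p /\ c 1 = q.

Definition Iminus (R : realType) (n : nat) (M : topologicalType)
    (D : M -> Pt R n) (p : M) : set M := [set q | chron D q p].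

Definition Ein_Iminus (R : realType) (n : nat) (A : set (Pt R n)) : set (Pt R n) :=
  [set z | cyl z /\ exists w, A w /\
     exists c : R -> Pt R n,
       [/\ pw_curve id (@fut_timelike R n) c,
           (forall s, 0 <= s <= 1 -> cyl (c s)), c 0 = z & c 1 = w]].

(* D is a local homeomorphism of M onto open subsets of the cylinder; then
   M carries the pulled-back smooth conformally flat Lorentzian structure,
   time-oriented by the pull-back of d/dt, and D is a conformal,
   time-orientation preserving local diffeomorphism. *)
Definition developing_map (R : realType) (n : nat) (M : topologicalType)
    (D : M -> Pt R n) : Prop :=
  continuous D /\ (forall p, cyl (D p)) /\
  forall p, exists (U : set M) (W : set (Pt R n)) (E : Pt R n -> M),
    [/\ open U /\ U p, open W,
        (forall x, U x -> W (D x) /\ E (D x) = x),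
        (forall z, W z -> cyl z -> U (E z) /\ D (E z) = z) &
        {within W `&` cyl (n:=n), continuous E}].

Definition dev_spacetime (R : realType) (n : nat) (M : topologicalType)
    (D : M -> Pt R n) : Prop :=
  [/\ hausdorff_space M, @second_countable M, connected [set: M] &
      developing_map D].

Definition glob_hyperbolic (R : realType) (n : nat) (M : topologicalType)
    (D : M -> Pt R n) : Prop :=
  (forall p, ~ exists c, pw_curve D (@fut_causal R n) c /\ c 0 = p /\ c 1 = p) /\
  (forall p q : M, compact ([set x | causal_rel D p x] `&` [set x | causal_rel D x q])).

From HB Require Import structures.
From mathcomp Require Import all_boot all_order all_algebra.
From mathcomp Require Import all_classical all_reals all_analysis.
From mathcomp Require Import ring lra zify.
Import Order.TTheory GRing.Theory Num.Theory.
Import numFieldNormedType.Exports.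
Local Open Scope classical_set_scope.
Local Open Scope ring_scope.

(* Past-directed timelike curves in M are mapped by the continuous map D to
   timelike curves on the cylinder, so D(I^-(p)) lies in I^-(D p), and one
   inclusion follows because chronological pasts in Ein~ are transitive
   (concatenate the two curves).  Conversely, a timelike curve c from z to
   D p eventually stays in an open set W around D p on which D has the
   continuous inverse E; lifting the final subarc c([s0, 1]) by E shows that
   q := E (c s0) is in I^-(p), while the initial subarc c([0, s0]) shows that
   z is in the past of D q = c s0. *)

Lemma subspace_continuous_comp {T S U : topologicalType} {A : set T} {B : set S}
    {f : T -> S} {g : S -> U} :
  {within A, continuous f} -> (forall x, A x -> B (f x)) ->
  {within B, continuous g} -> {within A, continuous (g \o f)}.
Proof.
move=> /subspace_continuousP cf fAB /subspace_continuousP cg.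
apply/subspace_continuousP => x Ax Q /= gQ.
have /cf : within B (nbhs (f x)) (g @^-1` Q) by exact: cg (fAB _ Ax) _ gQ.
move=> /(_ Ax); rewrite !nbhs_filterE /fmap /within /=.
by apply: filterS => y Bfy Ay; exact: Bfy Ay (fAB _ Ay).
Qed.

Section affine_reparametrization.
Variable R : realType.

Lemma continuous_affine (a b : R) : continuous (fun s : R => a + b * s).
Proof.
move=> x; apply: continuousD; first exact: cst_continuous.
by apply: continuousM; [exact: cst_continuous | exact: cvg_id].
Qed.

Lemma derivable_affine (a b x : R) : derivable (fun s : R => a + b * s) x 1.
Proof.
apply: derivableD; first exact: derivable_cst.
by apply: derivableM; [exact: derivable_cst | exact: derivable_id].
Qed.

Lemma derive1_affine (a b x : R) : derive1 (fun s : R => a + b * s) x = b.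
Proof.
have dbs : derivable (fun s : R => b * s) x 1.
  by apply: derivableM; [exact: derivable_cst | exact: derivable_id].
rewrite derive1E deriveD // derive_cst add0r deriveM ?derive_cst ?derive_id //.
by rewrite /= scaler0 addr0 [_%:A]mulr1.
Qed.

Lemma derive1_comp_vec {V : normedModType R} {f : R -> R} {g : R -> V} {x : R} :
  derivable f x 1 -> derivable g (f x) 1 ->
  derive1 (g \o f) x = derive1 f x *: derive1 g (f x).
Proof.
move=> /derivable1_diffP df /derivable1_diffP dg.
rewrite derive1E'; last exact/differentiable_comp.
by rewrite diff_comp // /= -derive1E' // diff1E.
Qed.

Lemma derivable_comp_affine (V : normedModType R) (g : R -> V) (a b : R) :
  (forall s, derivable g s 1) -> forall s, derivable (fun s => g (a + b * s)) s 1.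
Proof.
move=> dg s; apply/derivable1_diffP/differentiable_comp.
  exact/derivable1_diffP/derivable_affine.
exact/derivable1_diffP/dg.
Qed.

Lemma derive1_comp_affine (V : normedModType R) (g : R -> V) (a b s : R) :
  derivable g (a + b * s) 1 ->
  derive1 (fun s => g (a + b * s)) s = b *: derive1 g (a + b * s).
Proof.
by move=> dg; rewrite (derive1_comp_vec (derivable_affine a b s) dg) derive1_affine.
Qed.

Lemma continuous_derive1_comp_affine (V : normedModType R) (g : R -> V) (a b : R) :
  (forall s, derivable g s 1) -> continuous (derive1 g) ->
  continuous (derive1 (fun s => g (a + b * s))).
Proof.
move=> dg cg; rewrite (funext (fun s => derive1_comp_affine V g a b s (dg _))) => x.
apply: (@continuousZ _ _ _ (fun=> b) (fun s => derive1 g (a + b * s))).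
  exact: cst_continuous.
exact: continuous_comp (continuous_affine _ _ _) (cg _).
Qed.

End affine_reparametrization.

Definition C1_arc {R : realType} {n : nat} (P : 'rV[R]_n -> R -> Prop)
    (c : R -> Pt R n) (x y : R) : Prop :=
  exists (g : R -> 'rV[R]_n) (h : R -> R),
    [/\ forall s, derivable g s 1, forall s, derivable h s 1,
        continuous (derive1 g), continuous (derive1 h) &
        forall s, x <= s <= y -> c s = (g s, h s) /\ P (derive1 g s) (derive1 h s)].

Definition pw_on {R : realType} {n : nat} (P : 'rV[R]_n -> R -> Prop)
    (c : R -> Pt R n) (u v : R) : Prop :=
  exists (k : nat) (a : nat -> R),
    [/\ a 0%N = u, a k = v, (forall i, (i < k)%N -> a i < a i.+1) &
        forall i, (i < k)%N -> C1_arc P c (a i) (a i.+1)].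

Section piecewise_curves.
Context {R : realType} {n : nat} {P : 'rV[R]_n -> R -> Prop}.
Hypothesis PZ : forall t v tau, 0 < t -> P v tau -> P (t *: v) (t * tau).

Lemma C1_arcW {c x y x' y'} :
  x <= x' -> y' <= y -> C1_arc P c x y -> C1_arc P c x' y'.
Proof.
move=> xx' y'y [g [h [dg dh cg ch gh]]]; exists g, h; split=> // s /andP[xs sy].
by apply: gh; rewrite (le_trans xx' xs) (le_trans sy y'y).
Qed.

Lemma C1_arc_eq c c' x y :
  (forall s, x <= s <= y -> c s = c' s) -> C1_arc P c x y -> C1_arc P c' x y.
Proof.
move=> cc' [g [h [dg dh cg ch gh]]]; exists g, h; split=> // s sxy.
by rewrite -cc'//; exact: gh.
Qed.

Lemma C1_arc_affine c a b x y : 0 < b ->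
  C1_arc P c (a + b * x) (a + b * y) -> C1_arc P (fun s => c (a + b * s)) x y.
Proof.
move=> b0 [g [h [dg dh cg ch gh]]].
exists (fun s => g (a + b * s)), (fun s => h (a + b * s)); split.
- exact: derivable_comp_affine.
- exact: derivable_comp_affine.
- exact: continuous_derive1_comp_affine.
- exact: continuous_derive1_comp_affine.
move=> s /andP[xs sy].
have [-> Pgh] : c (a + b * s) = (g (a + b * s), h (a + b * s)) /\
    P (derive1 g (a + b * s)) (derive1 h (a + b * s)).
  by apply: gh; rewrite !lerD2l !ler_pM2l // xs sy.
by split=> //; rewrite !derive1_comp_affine //; exact: PZ.
Qed.

Lemma partition_le {a : nat -> R} {k : nat} :
  (forall i, (i < k)%N -> a i < a i.+1) ->
  forall i j, (i <= j)%N -> (j <= k)%N -> a i <= a j.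
Proof.
move=> a_incr i; elim=> [|j IH]; first by rewrite leqn0 => /eqP ->.
rewrite leq_eqVlt => /orP[/eqP -> //| ij] jk.
exact: le_trans (IH ij (ltnW jk)) (ltW (a_incr _ jk)).
Qed.

Lemma pw_on_eq c c' u v :
  (forall s, u <= s <= v -> c s = c' s) -> pw_on P c u v -> pw_on P c' u v.
Proof.
move=> cc' [k [a [a0 ak a_incr arcs]]]; exists k, a; split=> // i ik.
apply: C1_arc_eq (arcs i ik) => s /andP[ls us]; apply: cc'.
rewrite -a0 -ak (le_trans _ ls) ?(le_trans us) //.
  exact: partition_le a_incr _ _ ik (leqnn k).
exact: partition_le a_incr _ _ (leq0n i) (ltnW ik).
Qed.

Lemma pw_on_arc c u v : u < v -> C1_arc P c u v -> pw_on P c u v.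
Proof.
move=> uv arc; exists 1%N, (fun i => if i == 0%N then u else v).
by split=> // -[].
Qed.

Lemma pw_on_cat c u v w : pw_on P c u v -> pw_on P c v w -> pw_on P c u w.
Proof.
move=> [k1 [a1 [a10 a1k a1_incr arcs1]]] [k2 [a2 [a20 a2k a2_incr arcs2]]].
pose a i := if (i <= k1)%N then a1 i else a2 (i - k1)%N.
have aR i : (k1 <= i)%N -> a i = a2 (i - k1)%N.
  rewrite /a => k1i; case: leqP => // ik1.
  have -> : i = k1 by apply/eqP; rewrite eqn_leq ik1 k1i.
  by rewrite subnn a20 a1k.
exists (k1 + k2)%N, a; split.
- by rewrite /a leq0n a10.
- by rewrite aR ?leq_addr // addKn a2k.
- move=> i ik; case: (ltnP i k1) => [ik1 | k1i].
    by rewrite /a ltnW // ik1; exact: a1_incr.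
  rewrite (aR i k1i) (aR i.+1 (leqW k1i)) subSn //; apply: a2_incr; lia.
- move=> i ik; case: (ltnP i k1) => [ik1 | k1i].
    by rewrite /a ltnW // ik1; exact: arcs1.
  rewrite (aR i k1i) (aR i.+1 (leqW k1i)) subSn //; apply: arcs2; lia.
Qed.

Lemma pw_on_affine c a b u v : 0 < b ->
  pw_on P c (a + b * u) (a + b * v) -> pw_on P (fun s => c (a + b * s)) u v.
Proof.
move=> b0 [k [e [e0 ek e_incr arcs]]].
have b_neq0 : b != 0 by rewrite gt_eqF.
have eE x : a + b * ((x - a) / b) = x by field.
exists k, (fun i => (e i - a) / b); split.
- by rewrite e0; field.
- by rewrite ek; field.
- by move=> i ik; rewrite ltr_pM2r ?invr_gt0 // ltrD2r; exact: e_incr.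
- by move=> i ik; apply: C1_arc_affine => //; rewrite !eE; exact: arcs.
Qed.

Lemma pw_on_split_last {c u v} : u < v -> pw_on P c u v ->
  exists t0, u <= t0 < v /\ forall t, t0 < t < v -> pw_on P c u t /\ pw_on P c t v.
Proof.
move=> uv [[|k] [a [a0 ak a_incr arcs]]]; first by move: uv; rewrite -a0 ak ltxx.
exists (a k); split.
  by rewrite -{1}a0 -ak (partition_le a_incr) //= a_incr.
have arc_to_v x : a k <= x -> C1_arc P c x v.
  by move=> kx; apply: C1_arcW (arcs k (ltnSn k)) => //; rewrite ak.
move=> t /andP[kt tv]; split; last exact: pw_on_arc tv (arc_to_v _ (ltW kt)).
apply: (pw_on_cat _ _ (a k)).
  by exists k, a; split=> // i ik; [apply: a_incr | apply: arcs]; exact: ltnW.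
exact: pw_on_arc kt (C1_arcW (lexx _) (ltW tv) (arc_to_v _ (lexx _))).
Qed.

Lemma pw_curveE (M : topologicalType) (D : M -> Pt R n) (c : R -> M) :
  pw_curve D P c <-> {within `[0, 1], continuous c} /\ pw_on P (D \o c) 0 1.
Proof. by []. Qed.

Lemma within_continuous_comp_affine {T : topologicalType} {c : R -> T} {a b x y : R} :
  {within `[0, 1], continuous c} -> (forall s, x <= s <= y -> 0 <= a + b * s <= 1) ->
  {within `[x, y], continuous (fun s => c (a + b * s))}.
Proof.
move=> cc ab01; apply: subspace_continuous_comp _ _ cc.
  exact/continuous_subspaceT/continuous_affine.
by move=> s /=; rewrite !in_itv /=; exact: ab01.
Qed.

Lemma pw_curve_sub {c : R -> Pt R n} {u v : R} : 0 <= u -> u < v -> v <= 1 ->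
  {within `[0, 1], continuous c} -> pw_on P c u v ->
  pw_curve id P (fun s => c (u + (v - u) * s)).
Proof.
move=> u0 uv v1 cc cuv; split.
  apply: within_continuous_comp_affine cc _ => s /andP[s0 s1].
  apply/andP; split; nra.
apply: pw_on_affine; first by rewrite subr_gt0.
by rewrite mulr0 addr0 mulr1 addrC subrK.
Qed.

Lemma itvcc_splitU (a m b : R) : a <= m <= b ->
  `[a, b]%classic = `[a, m]%classic `|` `[m, b]%classic :> set R.
Proof.
move=> /andP[am mb]; apply/seteqP; split=> x /=; rewrite !in_itv /=.
  by case/andP => ax xb; case: (leP x m) => xm; [left | right];
    apply/andP; split; lra.
by case=> /andP[h1 h2]; apply/andP; split; lra.
Qed.

Lemma pw_curve_cat {c1 c2 : R -> Pt R n} :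
  pw_curve id P c1 -> pw_curve id P c2 -> c1 1 = c2 0 ->
  pw_curve id P (fun s => if s <= 2^-1 then c1 (2 * s) else c2 (2 * s - 1)).
Proof.
move=> [cc1 pc1] [cc2 pc2] c12.
set c := (X in pw_curve _ _ X).
have c_left s : s <= 2^-1 -> c s = c1 (0 + 2 * s) by rewrite /c add0r => ->.
have c_right s : 2^-1 <= s -> c s = c2 (-1 + 2 * s).
  rewrite /c addrC; case: ifPn => // s_le s_ge.
  have -> : s = 2^-1 by apply/eqP; rewrite eq_le s_le s_ge.
  by rewrite mulfV ?pnatr_eq0 // addNr.
clearbody c; split.
  rewrite (itvcc_splitU 0 2^-1 1); last by apply/andP; split; lra.
  apply: withinU_continuous; [exact: itv_closed | exact: itv_closed | |].
  - apply: subspace_eq_continuous (within_continuous_comp_affine (a:=0) (b:=2) cc1 _).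
      by move=> s; rewrite inE /= in_itv /= => /andP[_ s2]; exact/esym/c_left.
    by move=> s /andP[s0 s2]; apply/andP; split; lra.
  - apply: subspace_eq_continuous (within_continuous_comp_affine (a:=-1) (b:=2) cc2 _).
      by move=> s; rewrite inE /= in_itv /= => /andP[s2 _]; exact/esym/c_right.
    by move=> s /andP[s2 s1]; apply/andP; split; lra.
have two_half : 2 * 2^-1 = 1 :> R by rewrite mulfV ?pnatr_eq0.
apply: (pw_on_cat _ _ 2^-1).
  apply: pw_on_eq (pw_on_affine c1 0 2 0 2^-1 _ _) => //.
    by move=> s /andP[_ s2]; rewrite c_left.
  by rewrite mulr0 addr0 add0r two_half.
apply: pw_on_eq (pw_on_affine c2 (-1) 2 2^-1 1 _ _) => //.
  by move=> s /andP[s2 _]; rewrite c_right.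
by rewrite two_half mulr1 addNr; have -> : -1 + 2 = 1 :> R by lra.
Qed.

Lemma pw_curve_push (M : topologicalType) (D : M -> Pt R n) (c : R -> M) :
  continuous D -> pw_curve D P c -> pw_curve id P (D \o c).
Proof.
move=> cD /pw_curveE[cc pc]; split=> //.
by apply: (subspace_continuous_comp (B := setT) cc) => //; exact: continuous_subspaceT.
Qed.

Lemma pw_curve_lift (M : topologicalType) (D : M -> Pt R n) (E : Pt R n -> M)
    (B : set (Pt R n)) (c : R -> Pt R n) :
  {within B, continuous E} ->
  (forall s, 0 <= s <= 1 -> B (c s) /\ D (E (c s)) = c s) ->
  pw_curve id P c -> pw_curve D P (E \o c).
Proof.
move=> cE cB [cc pc]; apply/pw_curveE; split.
  by apply: subspace_continuous_comp cc _ cE => s; rewrite /= in_itv => /cB[].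
by apply: pw_on_eq pc => s /cB[_ DEc]; rewrite /= DEc.
Qed.
End piecewise_curves.

Lemma sqnZ (R : realType) (n : nat) (t : R) (v : 'rV[R]_n) :
  sqn (t *: v) = t ^+ 2 * sqn v.
Proof. by rewrite /sqn mulr_sumr; apply: eq_bigr => i _; rewrite mxE exprMn. Qed.

Lemma fut_timelikeZ {R : realType} {n : nat} (t : R) (v : 'rV[R]_n) (tau : R) :
  0 < t -> fut_timelike v tau -> fut_timelike (t *: v) (t * tau).
Proof.
move=> t0 [vtau tau0]; split; last exact: mulr_gt0.
by rewrite sqnZ exprMn ltr_pM2l // exprn_gt0.
Qed.

Lemma within01_open_near1 {R : realType} {T : topologicalType} {c : R -> T}
    {W : set T} :
  {within `[0, 1], continuous c} -> open W -> W (c 1) ->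
  exists2 t0 : R, t0 < 1 & forall t, t0 < t <= 1 -> W (c t).
Proof.
move=> /subspace_continuousP cc oW Wc1.
have /cc : (`[0, 1]%classic : set R) 1 by rewrite /= in_itv /= lexx ler01.
move=> /(_ W (open_nbhs_nbhs (conj oW Wc1))).
rewrite nbhs_filterE /fmap /within /= => /nbhs_ballP[e /= e0 ceW].
exists (Num.max (1 - e) 0); first by rewrite gt_max ltr01 andbT; lra.
move=> t /andP[]; rewrite gt_max => /andP[et t0] t1; apply: ceW.
  by rewrite -ball_normE /= ger0_norm; lra.
by rewrite /= in_itv /= t1 ltW.
Qed.

Section einstein_past.
Variables (R : realType) (n : nat).

Lemma Ein_Iminus_trans (A B : set (Pt R n)) :
  A `<=` Ein_Iminus B -> Ein_Iminus A `<=` Ein_Iminus B.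
Proof.
move=> AB z [zc [w [Aw [c1 [pc1 cyl1 c10 c11]]]]].
have [_ [b [Bb [c2 [pc2 cyl2 c20 c21]]]]] := AB w Aw.
split=> //; exists b; split=> //.
exists (fun s => if s <= 2^-1 then c1 (2 * s) else c2 (2 * s - 1)); split.
- by apply: (pw_curve_cat fut_timelikeZ pc1 pc2); rewrite c11 c20.
- move=> s /andP[s0 s1]; case: leP => s2; [apply: cyl1 | apply: cyl2];
    apply/andP; split; lra.
- by rewrite invr_ge0 ler0n mulr0.
- have -> : (1 : R) <= 2^-1 = false by apply/negbTE; rewrite -ltNge; lra.
  by rewrite mulr1 addrK.
Qed.

Lemma image_Iminus_sub (M : topologicalType) (D : M -> Pt R n) (p : M) :
  developing_map D -> D @` Iminus D p `<=` Ein_Iminus [set D p].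
Proof.
move=> [cD [Dcyl _]] ? [q [c [pc [c0 c1]]] <-].
split=> //; exists (D p); split=> //; exists (D \o c); split.
- exact: pw_curve_push cD pc.
- by move=> s _; exact: Dcyl.
- by rewrite /= c0.
- by rewrite /= c1.
Qed.

Lemma Ein_Iminus_point_sub (M : topologicalType) (D : M -> Pt R n) (p : M) :
  developing_map D -> Ein_Iminus [set D p] `<=` Ein_Iminus (D @` Iminus D p).
Proof.
move=> [_ [_ Dloc]] z [zc [_ [-> [c [pc ccyl c0 c1]]]]].
have [U [W [E [[_ Up] oW UW WU cE]]]] := Dloc p.
have [WDp EDp] := UW p Up.
have [cc /(pw_on_split_last ltr01) [t0 [/andP[t0_ge0 t0_lt1] split_at]]] := pc.
have Wc1 : W (c 1) by rewrite c1.
have [t1 t1_lt1 cW] := within01_open_near1 cc oW Wc1.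
have [s0 [t0s0 t1s0 s0_lt1]] : exists s0, [/\ t0 < s0, t1 < s0 & s0 < 1].
  exists ((Num.max t0 t1 + 1) / 2).
  have : Num.max t0 t1 < 1 by rewrite gt_max t0_lt1.
  have : t0 <= Num.max t0 t1 by rewrite le_max lexx.
  have : t1 <= Num.max t0 t1 by rewrite le_max lexx orbT.
  by move=> *; split; lra.
have [pc_left pc_right] :
    pw_on (@fut_timelike R n) c 0 s0 /\ pw_on (@fut_timelike R n) c s0 1.
  by apply: split_at; rewrite t0s0.
have s0_ge0 : 0 <= s0 by lra.
have cWcyl s : s0 <= s <= 1 -> (W `&` cyl (n:=n)) (c s) /\ D (E (c s)) = c s.
  move=> /andP[s0s s1]; have Wcs : W (c s) by apply: cW; apply/andP; split; lra.
  have cyl_cs : cyl (c s) by apply: ccyl; apply/andP; split; lra.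
  by have [_ ->] := WU _ Wcs cyl_cs.
have s0_in : s0 <= s0 <= 1 by rewrite lexx ltW.
have [_ DEcs0] := cWcyl s0 s0_in.
split=> //; exists (c s0); split.
  exists (E (c s0)) => //.
  exists (E \o (fun s => c (s0 + (1 - s0) * s))); split; last split.
  - apply: pw_curve_lift cE _
      (pw_curve_sub fut_timelikeZ s0_ge0 s0_lt1 (lexx 1) cc pc_right).
    by move=> s /andP[s_ge0 s_le1]; apply: cWcyl; apply/andP; split; nra.
  - by rewrite /= mulr0 addr0.
  - by rewrite /= mulr1 addrC subrK c1 EDp.
exists (fun s => c (0 + (s0 - 0) * s)); split.
- by apply: (pw_curve_sub fut_timelikeZ (lexx 0) _ (ltW s0_lt1) cc pc_left); lra.
- by move=> s /andP[s_ge0 s_le1]; apply: ccyl; apply/andP; split; nra.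
- by rewrite mulr0 addr0 c0.
- by rewrite mulr1 subr0 add0r.
Qed.

End einstein_past.

Theorem lemma4p2 (R : realType) (n : nat) (M : topologicalType)
    (D : M -> Pt R n) :
  (3 <= n)%N -> dev_spacetime D -> glob_hyperbolic D ->
  forall p : M,
    Ein_Iminus (D @` Iminus D p) = Ein_Iminus [set D p].
Proof.
move=> _ [_ _ _ dev] _ p; apply/seteqP; split.
  exact/Ein_Iminus_trans/image_Iminus_sub.
exact: Ein_Iminus_point_sub.
Qed.
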